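(* Let $X,Y$ be compact metric spaces, $d$ the metric on $X$, and let $\phi:\mathrm{M}_m(\mathrm{C}(X))\to\mathrm{M}_{nm}(\mathrm{C}(Y))$ be a diagonal $*$-homomorphism with eigenvalue maps $\lambda_1,\dots,\lambda_n:Y\to X$, i.e. $\phi(f)=\mathrm{diag}(f\circ\lambda_1,\dots,f\circ\lambda_n)$ with each $f\circ\lambda_s$ an $m\times m$ block. Let $\epsilon>0$, $f\in\mathrm{M}_m(\mathrm{C}(X))$, and choose $\eta>0$ such that $\|f(x)-f(y)\|<\epsilon$ whenever $d(x,y)<2\eta$. Let $U$ be the open ball of radius $\eta$ centred at $x_0\in X$ and suppose that $Y=\lambda_1^{-1}(U)\cup\cdots\cup\lambda_n^{-1}(U)$. Then there exist a unitary $u\in\mathrm{M}_{nm}(\mathrm{C}(Y))$ and an element $b\in\mathrm{M}_{nm-m}(\mathrm{C}(Y))$ such that \[ \Big\|u\,\phi(f)\,u^*-\begin{pmatrix} f(x_0)&0\\0&b\end{pmatrix}\Big\|<\epsilon, \] where $f(x_0)\in\mathrm{M}_m$ is regarded as a constant function. *)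

From HB Require Import structures.
From mathcomp Require Import all_boot all_order all_algebra.
From mathcomp Require Import all_classical all_reals all_analysis.
From mathcomp Require Import complex.

Set Implicit Arguments.
Unset Strict Implicit.
Unset Printing Implicit Defensive.

Import Order.TTheory GRing.Theory Num.Theory.
Import numFieldTopology.Exports.
Local Open Scope classical_set_scope.
Local Open Scope ring_scope.

Section Defs.
Variable R : realType.

Definition cabs2 (z : R[i]) : R := complex.Re z ^+ 2 + complex.Im z ^+ 2.

Definition vnorm k (v : 'cV[R[i]]_k) : R := Num.sqrt (\sum_(i < k) cabs2 (v i ord0)).

Definition opnorm k l (A : 'M[R[i]]_(k, l)) : R :=
  sup [set vnorm (A *m v) | v in [set v : 'cV[R[i]]_l | vnorm v <= 1]].

Definition adjmx k l (A : 'M[R[i]]_(k, l)) : 'M[R[i]]_(l, k) := map_mx (@conjc R) A^T.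

Definition unitary_mx k (A : 'M[R[i]]_k) : Prop :=
  A *m adjmx A = 1%:M /\ adjmx A *m A = 1%:M.

(* an element of M_(k,l)(C(T)): a matrix-valued function that is continuous
   (entrywise, real and imaginary parts) *)
Definition mx_continuous (T : topologicalType) k l (F : T -> 'M[R[i]]_(k, l)) : Prop :=
  forall i j, continuous (fun t => complex.Re (F t i j)) /\ continuous (fun t => complex.Im (F t i j)).

Definition supnorm (Y : Type) k l (F : Y -> 'M[R[i]]_(k, l)) : R :=
  sup [set opnorm (F y) | y in [set: Y]].
End Defs.

Lemma blk_proof n m (i : 'I_(n * m)) : (i %/ m < n)%N.
Proof.
case: i => i /=; case: m => [|m]; first by rewrite muln0.
by rewrite ltn_divLR.
Qed.

Lemma pos_proof n m (i : 'I_(n * m)) : (i %% m < m)%N.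
Proof.
case: i => i /=; case: m => [|m]; first by rewrite muln0.
by rewrite ltn_mod.
Qed.

Definition blk_of n m (i : 'I_(n * m)) : 'I_n := Ordinal (blk_proof i).
Definition pos_of n m (i : 'I_(n * m)) : 'I_m := Ordinal (pos_proof i).

(* the diagonal *-homomorphism phi(f) = diag(f o lam_1, ..., f o lam_n) *)
Definition diag_hom (R : realType) (X Y : Type) n m (lam : 'I_n -> Y -> X)
  (f : X -> 'M[R[i]]_m) : Y -> 'M[R[i]]_(n * m) :=
  fun y => \matrix_(i, j) (if blk_of i == blk_of j
                           then f (lam (blk_of i) y) (pos_of i) (pos_of j)
                           else 0).

Lemma diag2_proof n m : (0 < n)%N -> (m + (n * m - m) = n * m)%N.
Proof. by case: n => // n _; rewrite mulSn addKn. Qed.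

Definition diag2 (R : realType) n m (hn : (0 < n)%N) (A : 'M[R[i]]_m)
  (B : 'M[R[i]]_(n * m - m)) : 'M[R[i]]_(n * m) :=
  castmx (diag2_proof m hn, diag2_proof m hn) (block_mx A 0 0 B).

(* Let (h_s) be a partition of unity on Y subordinate to the cover by the
   sets lam_s^-1(U), and v(y) the unit vector (sqrt h_s(y))_s.  A Householder
   matrix O(y) with first row v(y) depends continuously on y, and
   u = O (x) 1_m is unitary.  Replace f by g = f - w (f - f(x0)), where the
   cutoff w is 1 on U and 0 off the ball of radius 2 eta: then g = f(x0) on U,
   and |phi(f) - phi(g)| <= max_x w(x) |f(x) - f(x0)| < eps, the maximum being
   attained on the compact X.  In u phi(g) u*, the block (1, t) is
   sum_s v_s O_ts g(lam_s) = f(x0) sum_s v_s O_ts = delta_1t f(x0), because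
   v_s != 0 only when lam_s(y) lies in U; so u phi(g) u* = diag(f(x0), b). *)

From HB Require Import structures.
From mathcomp Require Import all_boot all_order all_algebra.
From mathcomp Require Import all_classical all_reals all_analysis.
From mathcomp Require Import complex mxtens.
From mathcomp Require Import ring lra.

Set Implicit Arguments.
Unset Strict Implicit.
Unset Printing Implicit Defensive.

Import Order.TTheory GRing.Theory Num.Theory.
Import numFieldTopology.Exports.
Local Open Scope classical_set_scope.
Local Open Scope ring_scope.
Local Open Scope complex_scope.

Section SquaredModulus.
Variable R : realType.
Implicit Types a b z : R[i].

Lemma cabs2_ge0 z : 0 <= cabs2 z.
Proof. by rewrite addr_ge0 ?sqr_ge0. Qed.

Lemma cabs2_eq0 z : (cabs2 z == 0) = (z == 0).
Proof.
case: z => x y; rewrite /cabs2 /= paddr_eq0 ?sqr_ge0 // !sqrf_eq0.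
by rewrite eq_complex.
Qed.

Lemma cabs2M a b : cabs2 (a * b) = cabs2 a * cabs2 b.
Proof. by case: a b => [x y] [x' y']; rewrite /cabs2 /=; ring. Qed.

Lemma cabs2N z : cabs2 (- z) = cabs2 z.
Proof. by case: z => x y; rewrite /cabs2 /= !sqrrN. Qed.

Lemma cabs2_real (r : R) : cabs2 r%:C = r ^+ 2.
Proof. by rewrite /cabs2 /= expr0n addr0. Qed.

Lemma cabs2E z : cabs2 z = complex.Re (z^* * z).
Proof. by case: z => x y; rewrite /cabs2 /=; ring. Qed.

(* Peter-Paul: the difference of the two sides is [d^-1 |d a - b|^2]. *)
Lemma cabs2D_le a b (d : R) : 0 < d ->
  cabs2 (a + b) <= (1 + d) * cabs2 a + (1 + d^-1) * cabs2 b.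
Proof.
case: a b => [x y] [x' y'] d0; rewrite /cabs2 /= -subr_ge0.
have -> : (1 + d) * (x ^+ 2 + y ^+ 2) + (1 + d^-1) * (x' ^+ 2 + y' ^+ 2)
    - ((x + x') ^+ 2 + (y + y') ^+ 2) = d^-1 * ((d * x - x') ^+ 2 + (d * y - y') ^+ 2).
  by field; rewrite gt_eqF.
by apply: mulr_ge0; [rewrite invr_ge0 ltW | rewrite addr_ge0 ?sqr_ge0].
Qed.

Lemma cabs2_sum_le k (F : 'I_k -> R[i]) :
  cabs2 (\sum_(j < k) F j) <= (2 ^ k)%:R * \sum_(j < k) cabs2 (F j).
Proof.
elim: k F => [|k IH] F; first by rewrite !big_ord0 cabs2_real expr0n mulr0.
rewrite !big_ord_recr /= expnS natrM.
apply: le_trans (cabs2D_le _ _ ltr01) _; rewrite invr1.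
have := IH (fun j => F (widen_ord (leqnSn k) j)).
have := cabs2_ge0 (F ord_max).
have : 0 <= \sum_(j < k) cabs2 (F (widen_ord (leqnSn k) j)).
  by rewrite sumr_ge0 // => j _; exact: cabs2_ge0.
have : 1 <= (2 ^ k)%:R :> R by rewrite ler1n expn_gt0.
rewrite -[2%:R]/(1 + 1 : R); nra.
Qed.

End SquaredModulus.

Section OperatorNorm.
Variable R : realType.
Local Notation C := R[i].

Definition vnorm2 k (v : 'cV[C]_k) : R := \sum_i cabs2 (v i 0).

Definition frobenius2 k l (A : 'M[C]_(k, l)) : R := \sum_i \sum_j cabs2 (A i j).

Lemma vnorm2_ge0 k (v : 'cV[C]_k) : 0 <= vnorm2 v.
Proof. by rewrite sumr_ge0 // => i _; exact: cabs2_ge0. Qed.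

Lemma frobenius2_ge0 k l (A : 'M[C]_(k, l)) : 0 <= frobenius2 A.
Proof. by rewrite sumr_ge0 // => i _; rewrite sumr_ge0 // => j _; exact: cabs2_ge0. Qed.

Lemma vnormE k (v : 'cV[C]_k) : vnorm v = Num.sqrt (vnorm2 v).
Proof. by []. Qed.

Lemma vnorm20 k : vnorm2 (0 : 'cV[C]_k) = 0.
Proof. by rewrite /vnorm2 big1 // => i _; rewrite mxE cabs2_real expr0n. Qed.

Lemma vnorm_ge0 k (v : 'cV[C]_k) : 0 <= vnorm v.
Proof. exact: sqrtr_ge0. Qed.

Lemma sqr_vnorm k (v : 'cV[C]_k) : vnorm v ^+ 2 = vnorm2 v.
Proof. by rewrite sqr_sqrtr // vnorm2_ge0. Qed.

Lemma vnorm_gt0 k (v : 'cV[C]_k) : (0 < vnorm v) = (v != 0).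
Proof.
rewrite sqrtr_gt0 lt0r vnorm2_ge0 andbT; congr negb; apply/eqP/eqP => [|->].
  move/eqP; rewrite psumr_eq0 => [/allP v0|i _]; last exact: cabs2_ge0.
  apply/matrixP => i j; rewrite ord1 mxE; apply/eqP.
  by rewrite -cabs2_eq0; exact: v0 (mem_index_enum i).
exact: vnorm20.
Qed.

Lemma vnorm2Z k (r : R) (v : 'cV[C]_k) : vnorm2 (r%:C *: v) = r ^+ 2 * vnorm2 v.
Proof. by rewrite mulr_sumr; apply: eq_bigr => i _; rewrite mxE cabs2M cabs2_real. Qed.

Lemma vnorm2N k (v : 'cV[C]_k) : vnorm2 (- v) = vnorm2 v.
Proof. by apply: eq_bigr => i _; rewrite mxE cabs2N. Qed.

Lemma vnorm2E k (v : 'cV[C]_k) : vnorm2 v = complex.Re ((adjmx v *m v) 0 0).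
Proof. by rewrite mxE raddf_sum; apply: eq_bigr => i _; rewrite !mxE cabs2E. Qed.

Lemma adjmxK k l (A : 'M[C]_(k, l)) : adjmx (adjmx A) = A.
Proof. by apply/matrixP => i j; rewrite !mxE conjcK. Qed.

Lemma vnorm2_unitary k (U : 'M[C]_k) (v : 'cV[C]_k) :
  adjmx U *m U = 1%:M -> vnorm2 (U *m v) = vnorm2 v.
Proof.
move=> UU; rewrite !vnorm2E /adjmx trmx_mul map_mxM.
by rewrite mulmxA -(mulmxA _ _ U) -map_trmx UU mulmx1.
Qed.

Lemma vnormD k (v w : 'cV[C]_k) : vnorm (v + w) <= vnorm v + vnorm w.
Proof.
have [->|v0] := eqVneq v 0; first by rewrite add0r lerDr vnorm_ge0.
have [->|w0] := eqVneq w 0; first by rewrite addr0 lerDl vnorm_ge0.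
have [vp wp] := (vnorm_gt0 v, vnorm_gt0 w); rewrite v0 w0 in vp wp.
(* Peter-Paul with [d = |w| / |v|] is the squared triangle inequality. *)
set d := vnorm w / vnorm v.
have sqrD : (vnorm v + vnorm w) ^+ 2
            = (1 + d) * vnorm v ^+ 2 + (1 + d^-1) * vnorm w ^+ 2.
  by rewrite /d invf_div; field; rewrite !gt_eqF.
rewrite -ler_sqr ?nnegrE ?addr_ge0 ?vnorm_ge0 // sqrD !sqr_vnorm.
rewrite /vnorm2 !mulr_sumr -big_split; apply: ler_sum => i _.
by rewrite mxE; apply: cabs2D_le; rewrite divr_gt0.
Qed.

Lemma vnorm2_mulmx_le k l (A : 'M[C]_(k, l)) (v : 'cV[C]_l) :
  vnorm2 (A *m v) <= (2 ^ l)%:R * frobenius2 A * vnorm2 v.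
Proof.
rewrite -mulrA mulr_suml mulr_sumr; apply: ler_sum => i _.
rewrite mxE; apply: le_trans (cabs2_sum_le _) _; rewrite ler_wpM2l //.
rewrite mulr_suml; apply: ler_sum => j _; rewrite cabs2M ler_wpM2l ?cabs2_ge0 //.
by rewrite /vnorm2 (bigD1 j) //= lerDl sumr_ge0 // => i' _; exact: cabs2_ge0.
Qed.

Let unit_ball_image k l (A : 'M[C]_(k, l)) :=
  [set vnorm (A *m v) | v in [set v : 'cV[C]_l | vnorm v <= 1]].

Let unit_ball_image_ub k l (A : 'M[C]_(k, l)) : has_ubound (unit_ball_image A).
Proof.
exists (Num.sqrt ((2 ^ l)%:R * frobenius2 A)) => _ [v /= v1 <-].
apply: ler_wsqrtr; apply: le_trans (vnorm2_mulmx_le A v) _.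
rewrite ler_piMr ?mulr_ge0 ?frobenius2_ge0 //.
by rewrite -sqr_vnorm -(expr1n _ 2) ler_sqr ?nnegrE ?vnorm_ge0.
Qed.

Lemma opnorm_ub k l (A : 'M[C]_(k, l)) v : vnorm v <= 1 -> vnorm (A *m v) <= opnorm A.
Proof. by move=> v1; apply: (ub_le_sup (unit_ball_image_ub A)); exists v. Qed.

Lemma opnorm_ge0 k l (A : 'M[C]_(k, l)) : 0 <= opnorm A.
Proof.
apply: le_trans (vnorm_ge0 (A *m 0)) (opnorm_ub _ _).
by rewrite vnormE vnorm20 sqrtr0.
Qed.

Lemma opnorm_le k l (A : 'M[C]_(k, l)) c :
  (forall v, vnorm v <= 1 -> vnorm (A *m v) <= c) -> opnorm A <= c.
Proof.
move=> Ac; apply: ge_sup => [|_ [v v1 <-]]; last exact: Ac.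
by exists (vnorm (A *m 0)), 0; rewrite //= vnormE vnorm20 sqrtr0.
Qed.

Lemma opnorm_le_sqr k l (A : 'M[C]_(k, l)) c : 0 <= c ->
  (forall v, vnorm2 (A *m v) <= c ^+ 2 * vnorm2 v) -> opnorm A <= c.
Proof.
move=> c0 Ac; apply: opnorm_le => v v1.
rewrite -(ler_sqr (vnorm_ge0 _)) ?nnegrE // sqr_vnorm.
apply: le_trans (Ac v) _; rewrite ler_piMr ?sqr_ge0 //.
by rewrite -sqr_vnorm -(expr1n _ 2) ler_sqr ?nnegrE ?vnorm_ge0.
Qed.

Lemma vnorm2_mulmx_opnorm k l (A : 'M[C]_(k, l)) v :
  vnorm2 (A *m v) <= opnorm A ^+ 2 * vnorm2 v.
Proof.
have [->|v0] := eqVneq v 0; first by rewrite mulmx0 !vnorm20 mulr0.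
have vp : 0 < vnorm v by rewrite vnorm_gt0.
pose w := (vnorm v)^-1%:C *: v.
have w1 : vnorm w <= 1.
  by rewrite vnormE vnorm2Z -(sqr_vnorm v) -exprMn mulVf ?gt_eqF // expr1n sqrtr1.
have := opnorm_ub A w1; rewrite -scalemxAr vnormE vnorm2Z.
rewrite -(ler_sqr (sqrtr_ge0 _)) ?nnegrE ?opnorm_ge0 // sqr_sqrtr; last first.
  by rewrite mulr_ge0 ?sqr_ge0 ?vnorm2_ge0.
by rewrite -(sqr_vnorm v) exprVn ler_pdivrMl ?exprn_gt0 // mulrC.
Qed.

Lemma opnormD k l (A B : 'M[C]_(k, l)) : opnorm (A + B) <= opnorm A + opnorm B.
Proof.
apply: opnorm_le => v v1; rewrite mulmxDl.
by apply: le_trans (vnormD _ _) _; apply: lerD; exact: opnorm_ub.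
Qed.

Lemma opnormN k l (A : 'M[C]_(k, l)) : opnorm (- A) = opnorm A.
Proof.
suff le_opN (B : 'M[C]_(k, l)) : opnorm (- B) <= opnorm B.
  by apply: le_anti; apply/andP; split; [|rewrite -{1}(opprK A)]; exact: le_opN.
apply: opnorm_le_sqr => [|v]; first exact: opnorm_ge0.
by rewrite mulNmx vnorm2N vnorm2_mulmx_opnorm.
Qed.

Lemma opnormZ k l (r : R) (A : 'M[C]_(k, l)) : 0 <= r -> opnorm (r%:C *: A) <= r * opnorm A.
Proof.
move=> r0; apply: opnorm_le_sqr => [|v]; first by rewrite mulr_ge0 ?opnorm_ge0.
rewrite -scalemxAl vnorm2Z exprMn -[_ * _ * vnorm2 v]mulrA ler_wpM2l ?sqr_ge0 //.
exact: vnorm2_mulmx_opnorm.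
Qed.

Lemma opnorm_le_frobenius k l (A : 'M[C]_(k, l)) :
  opnorm A <= Num.sqrt ((2 ^ l)%:R * frobenius2 A).
Proof.
apply: opnorm_le_sqr => [|v]; first exact: sqrtr_ge0.
by rewrite sqr_sqrtr ?mulr_ge0 ?frobenius2_ge0 // vnorm2_mulmx_le.
Qed.

Lemma opnorm_lipschitz k l (A B : 'M[C]_(k, l)) : `|opnorm A - opnorm B| <= opnorm (A - B).
Proof.
have := opnormD (A - B) B; have := opnormD (B - A) A.
rewrite !subrK -opprB opnormN => leB leA.
move: (opnorm A) (opnorm B) (opnorm (A - B)) leA leB => a b d leA leB.
by rewrite ler_distl; apply/andP; split; lra.
Qed.

Lemma opnorm_unitary_conj k (U A : 'M[C]_k) : unitary_mx U ->
  opnorm (U *m A *m adjmx U) <= opnorm A.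
Proof.
case=> UUa UaU; apply: opnorm_le_sqr => [|v]; first exact: opnorm_ge0.
rewrite -!mulmxA vnorm2_unitary // -(vnorm2_unitary v (U := adjmx U)).
  exact: vnorm2_mulmx_opnorm.
by rewrite adjmxK.
Qed.

Lemma supnorm_le (T : Type) k l (F : T -> 'M[C]_(k, l)) c :
  0 <= c -> (forall t, opnorm (F t) <= c) -> supnorm F <= c.
Proof.
move=> c0 Fc; case: (pselect (exists t : T, True)) => [[t _]|T0].
  by apply: ge_sup => [|_ [t' _ <-]]; [exists (opnorm (F t)), t | exact: Fc].
rewrite /supnorm; suff -> : [set opnorm (F t) | t in [set: T]] = set0 by rewrite sup0.
by apply/seteqP; split => // z [t _ _]; case: T0; exists t.
Qed.

End OperatorNorm.

Section ComplexContinuity.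
Variables (R : realType) (T : topologicalType).
Local Notation C := R[i].
Implicit Types g h : T -> C.

Definition ccontinuous g :=
  continuous (fun t => complex.Re (g t)) /\ continuous (fun t => complex.Im (g t)).

Lemma continuous_sum_real I (r : seq I) (P : pred I) (F : I -> T -> R) :
  (forall i, continuous (F i)) -> continuous (fun t => \sum_(i <- r | P i) F i t).
Proof. by move=> Fc; apply: continuous_big => [|i _]; [exact: add_continuous | exact: Fc]. Qed.

Lemma ccontinuous_cst (c : C) : ccontinuous (fun=> c).
Proof. by split; exact: cst_continuous. Qed.

Lemma ccontinuous_real (r : T -> R) : continuous r -> ccontinuous (fun t => (r t)%:C).
Proof. by split => //; exact: cst_continuous. Qed.

Lemma ccontinuousD g h : ccontinuous g -> ccontinuous h -> ccontinuous (fun t => g t + h t).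
Proof.
case=> gRe gIm [hRe hIm]; split; under eq_fun do rewrite raddfD.
  by move=> t; apply: cvgD; [exact: gRe | exact: hRe].
by move=> t; apply: cvgD; [exact: gIm | exact: hIm].
Qed.

Lemma ccontinuousN g : ccontinuous g -> ccontinuous (fun t => - g t).
Proof.
case=> gRe gIm; split; under eq_fun do rewrite raddfN.
  by move=> t; apply: cvgN; exact: gRe.
by move=> t; apply: cvgN; exact: gIm.
Qed.

Lemma ccontinuousB g h : ccontinuous g -> ccontinuous h -> ccontinuous (fun t => g t - h t).
Proof. by move=> gc hc; apply: ccontinuousD => //; exact: ccontinuousN. Qed.

Let ReM (a b : C) :
  complex.Re (a * b) = complex.Re a * complex.Re b - complex.Im a * complex.Im b.
Proof. by case: a b => [x y] [x' y']. Qed.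

Let ImM (a b : C) :
  complex.Im (a * b) = complex.Re a * complex.Im b + complex.Im a * complex.Re b.
Proof. by case: a b => [x y] [x' y']. Qed.

Lemma ccontinuousM g h : ccontinuous g -> ccontinuous h -> ccontinuous (fun t => g t * h t).
Proof.
case=> gRe gIm [hRe hIm]; split.
  under eq_fun do rewrite ReM.
  by move=> t; apply: cvgB; apply: cvgM; [exact: gRe | exact: hRe | exact: gIm | exact: hIm].
under eq_fun do rewrite ImM.
by move=> t; apply: cvgD; apply: cvgM; [exact: gRe | exact: hIm | exact: gIm | exact: hRe].
Qed.

Lemma ccontinuous_conj g : ccontinuous g -> ccontinuous (fun t => (g t)^*).
Proof.
have ReJ (a : C) : complex.Re a^* = complex.Re a by case: a.
have ImJ (a : C) : complex.Im a^* = - complex.Im a by case: a.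
case=> gRe gIm; split; first by under eq_fun do rewrite ReJ.
by under eq_fun do rewrite ImJ; move=> t; apply: cvgN; exact: gIm.
Qed.

Lemma ccontinuous_sum I (r : seq I) (P : pred I) (F : I -> T -> C) :
  (forall i, ccontinuous (F i)) -> ccontinuous (fun t => \sum_(i <- r | P i) F i t).
Proof.
move=> Fc; split.
  under eq_fun do rewrite raddf_sum; apply: continuous_sum_real => i; exact: (Fc i).1.
under eq_fun do rewrite raddf_sum; apply: continuous_sum_real => i; exact: (Fc i).2.
Qed.

Lemma continuous_cabs2 g : ccontinuous g -> continuous (fun t => cabs2 (g t)).
Proof.
case=> gRe gIm t; apply: cvgD; rewrite expr2.
  by under eq_fun do rewrite expr2; apply: cvgM; exact: gRe.
by under eq_fun do rewrite expr2; apply: cvgM; exact: gIm.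
Qed.

End ComplexContinuity.

Section MatrixContinuity.
Variables (R : realType) (T : topologicalType).
Local Notation C := R[i].

Lemma mx_continuousP k l (F : T -> 'M[C]_(k, l)) :
  mx_continuous F <-> forall i j, ccontinuous (fun t => F t i j).
Proof. by []. Qed.

Lemma mx_continuous_cst k l (A : 'M[C]_(k, l)) : mx_continuous (fun _ : T => A).
Proof. by move=> i j; exact: ccontinuous_cst. Qed.

Lemma mx_continuous_comp (U : topologicalType) k l (F : U -> 'M[C]_(k, l)) (g : T -> U) :
  mx_continuous F -> continuous g -> mx_continuous (fun t => F (g t)).
Proof.
move=> Fc gc i j; split=> t.
  exact: (continuous_comp (gc t) ((Fc i j).1 (g t))).
exact: (continuous_comp (gc t) ((Fc i j).2 (g t))).
Qed.

Lemma mx_continuousB k l (A B : T -> 'M[C]_(k, l)) :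
  mx_continuous A -> mx_continuous B -> mx_continuous (fun t => A t - B t).
Proof.
move=> Ac Bc; apply/mx_continuousP => i j; under [X in ccontinuous X]eq_fun do rewrite !mxE.
exact: ccontinuousB.
Qed.

Lemma mx_continuousM k l p (A : T -> 'M[C]_(k, l)) (B : T -> 'M[C]_(l, p)) :
  mx_continuous A -> mx_continuous B -> mx_continuous (fun t => A t *m B t).
Proof.
move=> Ac Bc; apply/mx_continuousP => i j; under [X in ccontinuous X]eq_fun do rewrite mxE.
by apply: ccontinuous_sum => q; exact: ccontinuousM.
Qed.

Lemma mx_continuous_adj k l (A : T -> 'M[C]_(k, l)) :
  mx_continuous A -> mx_continuous (fun t => adjmx (A t)).
Proof.
move=> Ac; apply/mx_continuousP => i j; under [X in ccontinuous X]eq_fun do rewrite !mxE.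
exact: ccontinuous_conj.
Qed.

Lemma mx_continuousZ k l (r : T -> R) (A : T -> 'M[C]_(k, l)) :
  continuous r -> mx_continuous A -> mx_continuous (fun t => (r t)%:C *: A t).
Proof.
move=> rc Ac; apply/mx_continuousP => i j; under [X in ccontinuous X]eq_fun do rewrite mxE.
by apply: ccontinuousM => //; exact: ccontinuous_real.
Qed.

(* The operator norm is Lipschitz for the (continuous) Frobenius norm. *)
Lemma continuous_opnorm k l (F : T -> 'M[C]_(k, l)) :
  mx_continuous F -> continuous (fun t => opnorm (F t)).
Proof.
move=> Fc t; apply/cvgrPdist_lt => e e0.
pose D s := frobenius2 (F s - F t).
have Dc : continuous D.
  rewrite /D /frobenius2; apply: continuous_sum_real => i.
  apply: continuous_sum_real => j; apply: continuous_cabs2.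
  exact: (mx_continuousB Fc (mx_continuous_cst (F t))).
have D0 : D t = 0.
  rewrite /D subrr /frobenius2 big1 // => i _.
  by rewrite big1 // => j _; rewrite mxE cabs2_real expr0n.
have e2 : 0 < e ^+ 2 / (2 ^ l)%:R by rewrite divr_gt0 ?exprn_gt0 // ltr0n expn_gt0.
move/cvgrPdist_lt: (Dc t) => /(_ _ e2); apply: filterS => s.
rewrite D0 sub0r normrN ger0_norm ?frobenius2_ge0 // => Ds.
apply: le_lt_trans (opnorm_lipschitz _ _) _.
rewrite -opprB opnormN; apply: le_lt_trans (opnorm_le_frobenius _) _.
rewrite -[e]ger0_norm ?ltW // -sqrtr_sqr ltr_sqrt ?exprn_gt0 //.
by rewrite mulrC -ltr_pdivlMr // ltr0n expn_gt0.
Qed.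

End MatrixContinuity.

Section BlockDiagonal.
Variable K : comPzRingType.

Lemma sum_mxtens (V : nmodType) n m (F : 'I_(n * m) -> V) :
  \sum_k F k = \sum_a \sum_p F (mxtens_index (a, p)).
Proof.
rewrite pair_big (reindex (@mxtens_index n m)) /=; first by apply: eq_bigr => -[a p].
by exists (@mxtens_unindex n m) => k _; rewrite (mxtens_indexK, mxtens_unindexK).
Qed.

Lemma blk_of_mxtens n m (a : 'I_n) (p : 'I_m) : blk_of (mxtens_index (a, p)) = a.
Proof. by rewrite -[RHS](congr1 fst (mxtens_indexK (a, p))); apply: val_inj. Qed.

Lemma pos_of_mxtens n m (a : 'I_n) (p : 'I_m) : pos_of (mxtens_index (a, p)) = p.
Proof. by rewrite -[RHS](congr1 snd (mxtens_indexK (a, p))); apply: val_inj. Qed.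

Lemma tens1mx1 n m : (1%:M : 'M[K]_n) *t (1%:M : 'M[K]_m) = 1%:M.
Proof.
apply/matrixP => i j; case: (mxtens_indexP i) => a p; case: (mxtens_indexP j) => b q.
rewrite tensmxE !mxE (can_eq (@mxtens_indexK n m)) xpair_eqE.
by case: (a == b); rewrite ?mul1r ?mul0r.
Qed.

Definition blockdiag n m (G : 'I_n -> 'M[K]_m) : 'M[K]_(n * m) :=
  \sum_s delta_mx s s *t G s.

Lemma blockdiagE n m (G : 'I_n -> 'M[K]_m) a p b q :
  blockdiag G (mxtens_index (a, p)) (mxtens_index (b, q)) = (a == b)%:R * G a p q.
Proof.
rewrite summxE (bigD1 a) //= tensmxE mxE !eqxx eq_sym big1 ?addr0 // => s sa.
by rewrite tensmxE mxE eq_sym (negbTE sa) mul0r.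
Qed.

Lemma blockdiagB n m (G H : 'I_n -> 'M[K]_m) :
  blockdiag G - blockdiag H = blockdiag (fun s => G s - H s).
Proof.
apply/matrixP => i j; case: (mxtens_indexP i) => a p; case: (mxtens_indexP j) => b q.
by rewrite !mxE !blockdiagE /= !mxE mulrBr.
Qed.

Lemma blockdiag_mulmx n m (G : 'I_n -> 'M[K]_m) (v : 'cV[K]_(n * m)) a p :
  (blockdiag G *m v) (mxtens_index (a, p)) 0 =
  (G a *m \col_q v (mxtens_index (a, q)) 0) p 0.
Proof.
rewrite !mxE sum_mxtens (bigD1 a) //= [X in _ + X]big1 ?addr0 => [|b ba].
  by apply: eq_bigr => q _; rewrite blockdiagE eqxx mul1r mxE.
by rewrite big1 // => q _; rewrite blockdiagE eq_sym (negbTE ba) !mul0r.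
Qed.

Lemma conj_blockdiagE n m (O O' : 'M[K]_n) (G : 'I_n -> 'M[K]_m) a p b q :
  ((O *t 1%:M) *m blockdiag G *m (O' *t 1%:M)) (mxtens_index (a, p)) (mxtens_index (b, q))
  = \sum_s O a s * O' s b * G s p q.
Proof.
rewrite mulmx_sumr mulmx_suml summxE; apply: eq_bigr => s _.
rewrite !tensmx_mul mul1mx mulmx1 tensmxE; congr (_ * _).
rewrite -[delta_mx s s](mul_delta_mx (0 : 'I_1)) mulmxA -colE -mulmxA -rowE.
by rewrite mxE big_ord1 !mxE.
Qed.

(* Only the [G s] with [O s0 s != 0] enter the block row and column [s0]. *)
Lemma conj_blockdiag_row_col n m (O : 'M[K]_n) (G : 'I_n -> 'M[K]_m) (A : 'M[K]_m) s0 :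
  O *m O^T = 1%:M -> (forall s, O s0 s != 0 -> G s = A) ->
  forall a p b q, (a == s0) || (b == s0) ->
  ((O *t 1%:M) *m blockdiag G *m (O^T *t 1%:M)) (mxtens_index (a, p)) (mxtens_index (b, q))
  = (a == b)%:R * A p q.
Proof.
move=> OOt GA a p b q ab0; rewrite conj_blockdiagE.
transitivity ((O *m O^T) a b * A p q); last by rewrite OOt mxE.
rewrite mxE mulr_suml; apply: eq_bigr => s _; rewrite mxE.
have [Os0|/GA->//] := eqVneq (O s0 s) 0.
by case/orP: ab0 => /eqP->; rewrite Os0 ?mul0r ?mulr0 ?mul0r.
Qed.

End BlockDiagonal.

Section ComplexBlocks.
Variable R : realType.
Local Notation C := R[i].

Lemma diag_homE (X Y : Type) n m (lam : 'I_n -> Y -> X) (f : X -> 'M[C]_m) y :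
  diag_hom lam f y = blockdiag (fun s => f (lam s y)).
Proof.
apply/matrixP => i j; case: (mxtens_indexP i) => a p; case: (mxtens_indexP j) => b q.
rewrite blockdiagE mxE !blk_of_mxtens !pos_of_mxtens.
by case: eqVneq => [->|]; rewrite ?mul1r ?mul0r.
Qed.

Lemma opnorm_blockdiag n m (G : 'I_n -> 'M[C]_m) c :
  0 <= c -> (forall s, opnorm (G s) <= c) -> opnorm (blockdiag G) <= c.
Proof.
move=> c0 Gc; apply: opnorm_le_sqr => // v.
rewrite /vnorm2 !sum_mxtens mulr_sumr; apply: ler_sum => a _.
under eq_bigr do rewrite blockdiag_mulmx.
have -> : \sum_p cabs2 (v (mxtens_index (a, p)) 0)
          = vnorm2 (\col_q v (mxtens_index (a, q)) 0) by apply: eq_bigr => p _; rewrite mxE.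
apply: le_trans (vnorm2_mulmx_opnorm _ _) _.
by rewrite ler_wpM2r ?vnorm2_ge0 // ler_sqr ?nnegrE ?opnorm_ge0.
Qed.

Lemma mx_continuous_blockdiag (T : topologicalType) n m (G : 'I_n -> T -> 'M[C]_m) :
  (forall s, mx_continuous (G s)) -> mx_continuous (fun t => blockdiag (G^~ t)).
Proof.
move=> Gc; apply/mx_continuousP => i j.
case: (mxtens_indexP i) => a p; case: (mxtens_indexP j) => b q.
under eq_fun do rewrite blockdiagE.
by apply: ccontinuousM; [exact: ccontinuous_cst | exact: Gc].
Qed.

Lemma adjmx_tens k l p q (A : 'M[C]_(k, l)) (B : 'M[C]_(p, q)) :
  adjmx (A *t B) = adjmx A *t adjmx B.
Proof. by rewrite /adjmx trmx_tens map_mxT. Qed.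

Lemma adjmx_real k l (A : 'M[R]_(k, l)) :
  adjmx (map_mx (real_complex R) A) = map_mx (real_complex R) A^T.
Proof. by apply/matrixP => i j; rewrite !mxE conjc_real. Qed.

Lemma adjmx1 k : adjmx (1%:M : 'M[C]_k) = 1%:M.
Proof. by rewrite /adjmx trmx1 map_mx1. Qed.

Lemma unitary_tens_orthogonal n m (O : 'M[R]_n) : O *m O^T = 1%:M ->
  unitary_mx (map_mx (real_complex R) O *t (1%:M : 'M[C]_m)).
Proof.
move=> OOt; have OtO := mulmx1C OOt.
by split; rewrite adjmx_tens adjmx_real adjmx1 tensmx_mul -map_mxM ?OOt ?OtO
                 map_mx1 mulmx1 tens1mx1.
Qed.

Definition mxcorner n m (hn : (0 < n)%N) (M : 'M[C]_(n * m)) : 'M[C]_(n * m - m) :=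
  drsubmx (castmx (esym (diag2_proof m hn), esym (diag2_proof m hn)) M).

Lemma diag2_mxcorner n m (hn : (0 < n)%N) (M : 'M[C]_(n * m)) (A : 'M[C]_m) :
  (forall a p b q, (a == Ordinal hn) || (b == Ordinal hn) ->
     M (mxtens_index (a, p)) (mxtens_index (b, q)) = (a == b)%:R * A p q) ->
  M = diag2 hn A (mxcorner hn M).
Proof.
move=> MA; set E := diag2_proof m hn; set N := castmx (esym E, esym E) M.
have {}MA k l :
    ((mxtens_unindex k).1 == Ordinal hn) || ((mxtens_unindex l).1 == Ordinal hn) ->
    M k l = ((mxtens_unindex k).1 == (mxtens_unindex l).1)%:R
            * A (mxtens_unindex k).2 (mxtens_unindex l).2.
  case: (mxtens_indexP k) => a p; case: (mxtens_indexP l) => b q.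
  by rewrite !mxtens_indexK; exact: MA.
have lshiftE i :
    mxtens_unindex (cast_ord (esym (esym E)) (lshift (n * m - m) i)) = (Ordinal hn, i).
  apply/eqP; rewrite xpair_eqE -!val_eqE /=.
  by rewrite (divn_small (ltn_ord i)) (modn_small (ltn_ord i)) !eqxx.
have rshiftE j : (mxtens_unindex (cast_ord (esym (esym E)) (rshift m j))).1 == Ordinal hn = false.
  have m0 : (0 < m)%N by case: m j {A M MA N E lshiftE} => [|//] [j]; rewrite muln0.
  by apply/negbTE; rewrite -val_eqE /= -lt0n divn_gt0 // leq_addr.
suff NA : block_mx A 0 0 (drsubmx N) = N by rewrite /diag2 /mxcorner -/E -/N NA castmxKV.
rewrite -[RHS]submxK; congr block_mx; apply/matrixP => i j; rewrite !mxE castmxE /=.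
all: rewrite MA ?lshiftE ?eqxx ?orbT //=.
- by rewrite mul1r.
- by rewrite eq_sym rshiftE mul0r.
- by rewrite rshiftE mul0r.
Qed.

End ComplexBlocks.

Section Householder.
Variables (F : fieldType) (n : nat) (s0 : 'I_n) (v : 'cV[F]_n).

(* Minus the reflection along [e_s0 + v]: for a unit vector [v] it is symmetric,
   involutive, and exchanges [e_s0] and [v]. *)
Definition householder_mx : 'M[F]_n :=
  (1 + v s0 0)^-1 *: ((delta_mx s0 0 + v) *m (delta_mx s0 0 + v)^T) - 1%:M.

Lemma householder_mxE a b : householder_mx a b =
  (1 + v s0 0)^-1 * ((a == s0)%:R + v a 0) * ((b == s0)%:R + v b 0) - (a == b)%:R.
Proof. by rewrite !mxE big_ord1 !mxE !eqxx !andbT mulrA. Qed.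

Lemma tr_householder_mx : householder_mx^T = householder_mx.
Proof. by rewrite /householder_mx linearB /= trmx1 linearZ /= trmx_mul trmxK. Qed.

Hypotheses (v_unit : v^T *m v = 1%:M) (v_s0 : 1 + v s0 0 != 0).

Lemma householder_mx_row b : householder_mx s0 b = v b 0.
Proof.
rewrite householder_mxE eqxx mulr1n mulVf // mul1r eq_sym.
by case: (b == s0); rewrite ?mulr1n ?mulr0n ?add0r ?subr0 // addrC addKr.
Qed.

Lemma householder_mx_invol : householder_mx *m householder_mx = 1%:M.
Proof.
set c := 1 + v s0 0; set w := delta_mx s0 0 + v.
have wE k : w k 0 = (k == s0)%:R + v k 0 by rewrite !mxE andbT.
have vv : \sum_(k | k != s0) v k 0 * v k 0 = 1 - v s0 0 * v s0 0.
  have := congr1 (fun M : 'M[F]_(1, 1) => M 0 0) v_unit; rewrite !mxE (bigD1 s0) //=.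
  under eq_bigr do rewrite mxE; rewrite mxE => h.
  by apply: (addrI (v s0 0 * v s0 0)); rewrite h addrC subrK.
have wTw : w^T *m w = (c + c)%:M.
  rewrite [LHS]mx11_scalar; congr (_%:M); rewrite mxE (bigD1 s0) //=.
  under eq_bigr => k ks0 do rewrite mxE wE (negbTE ks0) add0r.
  by rewrite vv mxE wE eqxx mulr1n /c; ring.
have XX : (c^-1 *: (w *m w^T)) *m (c^-1 *: (w *m w^T)) = c^-1 *: (w *m w^T) *+ 2.
  rewrite -scalemxAl -scalemxAr mulmxA -(mulmxA w) wTw mul_mx_scalar -scalemxAl.
  by rewrite !scalerA -scaler_nat scalerA; congr (_ *: _); field.
rewrite /householder_mx -/c -/w mulmxBl !mulmxBr XX !mulmx1 mul1mx.
by rewrite mulr2n addrK opprB addrC subrK.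
Qed.

End Householder.

Lemma continuous_mdist (R : realType) (X : metricType R) (x0 : X) :
  continuous (fun x : X => mdist x0 x).
Proof.
move=> x; apply/cvgrPdist_lt => e e0.
have : nbhs x (ball x e) by exact: nbhsx_ballx.
apply: filterS => y.
rewrite ballEmdist /= => xy; rewrite ltr_distl.
have := metric_triangle x0 x y; have := metric_triangle x0 y x.
by rewrite (metric_sym y x) => ? ?; apply/andP; split; lra.
Qed.

Section DiagonalHomomorphism.
Variables (R : realType) (X Y : metricType R) (n m : nat).
Local Notation C := R[i].
Hypothesis hn : (0 < n)%N.
Variables (lam : 'I_n -> Y -> X) (f : X -> 'M[C]_m) (eta : R) (x0 : X).
Hypotheses (lam_cont : forall s, continuous (lam s)) (f_cont : mx_continuous f).
Hypothesis eta_gt0 : 0 < eta.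
Hypothesis lam_cover :
  [set: Y] = \bigcup_(s in [set: 'I_n]) (lam s @^-1` [set x | mdist x0 x < eta]).

Definition bump (x : X) : R := Num.max 0 (eta - mdist x0 x).

Definition cutoff (x : X) : R := Num.min 1 (Num.max 0 (2 - mdist x0 x / eta)).

Lemma bump_ge0 x : 0 <= bump x.
Proof. by rewrite le_max lexx. Qed.

Lemma bump_gt0 x : (0 < bump x) = (mdist x0 x < eta).
Proof. by rewrite lt_max ltxx subr_gt0. Qed.

Lemma continuous_bump : continuous bump.
Proof.
move=> x; apply: (@continuous_max R X (fun=> 0) (fun z => eta - mdist x0 z) x).
  exact: cvg_cst.
by apply: cvgB; [exact: cvg_cst | exact: continuous_mdist].
Qed.

Lemma cutoff_ge0 x : 0 <= cutoff x.
Proof. by rewrite le_min ler01 le_max lexx. Qed.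

Lemma cutoff_le1 x : cutoff x <= 1.
Proof. by rewrite ge_min lexx. Qed.

Lemma cutoff_ball x : mdist x0 x < eta -> cutoff x = 1.
Proof.
move=> x_eta; have le12 : 1 <= 2 - mdist x0 x / eta.
  suff : mdist x0 x / eta <= 1 by lra.
  by rewrite ler_pdivrMr // mul1r ltW.
by rewrite /cutoff (max_idPr (le_trans ler01 le12)) (min_idPl le12).
Qed.

Lemma cutoff_neq0 x : cutoff x != 0 -> mdist x0 x < 2 * eta.
Proof.
apply: contraR; rewrite -leNgt => far; apply/eqP.
have : 2 - mdist x0 x / eta <= 0 by rewrite subr_le0 ler_pdivlMr.
by move=> le20; rewrite /cutoff (max_idPl le20) (min_idPr ler01).
Qed.

Lemma continuous_cutoff : continuous cutoff.
Proof.
move=> x; apply: (@continuous_min R X (fun=> 1) _ x); first exact: cvg_cst.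
apply: (@continuous_max R X (fun=> 0) _ x); first exact: cvg_cst.
apply: cvgB; first exact: cvg_cst.
by apply: cvgM; [exact: continuous_mdist | exact: cvg_cst].
Qed.

Lemma bump_sum_gt0 y : 0 < \sum_t bump (lam t y).
Proof.
have : [set: Y] y by [].
rewrite lam_cover => -[s _ /= s_eta]; rewrite (bigD1 s) //=.
apply: (@lt_le_trans _ _ (bump (lam s y))); first by rewrite bump_gt0.
by rewrite lerDl sumr_ge0 // => t _; exact: bump_ge0.
Qed.

Let continuous_bump_lam s : continuous (fun y => bump (lam s y)).
Proof. by move=> y; apply: cvg_comp; [exact: lam_cont | exact: continuous_bump]. Qed.

(* Square roots of a partition of unity subordinate to the cover of [Y] by the
   preimages under [lam s] of the ball of radius [eta] around [x0]. *)
Definition weight (y : Y) : 'cV[R]_n :=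
  \col_s Num.sqrt (bump (lam s y) / \sum_t bump (lam t y)).

Lemma weight_ge0 y s : 0 <= weight y s 0.
Proof. by rewrite mxE sqrtr_ge0. Qed.

Lemma weight_unit y : (weight y)^T *m weight y = 1%:M.
Proof.
rewrite [LHS]mx11_scalar mxE; congr (_%:M).
under eq_bigr do rewrite !mxE -expr2 sqr_sqrtr ?divr_ge0 ?bump_ge0 ?ltW ?bump_sum_gt0 //.
by rewrite -mulr_suml divff // gt_eqF ?bump_sum_gt0.
Qed.

Lemma weight_neq0 y s : weight y s 0 != 0 -> mdist x0 (lam s y) < eta.
Proof.
by rewrite mxE sqrtr_eq0 -ltNge pmulr_lgt0 ?invr_gt0 ?bump_sum_gt0 // bump_gt0.
Qed.

Lemma continuous_weight s : continuous (fun y => weight y s 0).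
Proof.
move=> y; under eq_fun do rewrite mxE.
apply: continuous_comp; last exact: sqrt_continuous.
apply: cvgM; first exact: continuous_bump_lam.
apply: cvgV; first by rewrite gt_eqF ?bump_sum_gt0.
exact: continuous_sum_real.
Qed.

Definition frame (y : Y) : 'M[R]_n := householder_mx (Ordinal hn) (weight y).

Let weight_s0 y : 1 + weight y (Ordinal hn) 0 != 0.
Proof. by rewrite gt_eqF // ltr_wpDr ?weight_ge0. Qed.

Lemma frame_orthogonal y : frame y *m (frame y)^T = 1%:M.
Proof. by rewrite tr_householder_mx householder_mx_invol ?weight_unit. Qed.

Lemma frame_row y s : frame y (Ordinal hn) s = weight y s 0.
Proof. exact: householder_mx_row. Qed.

Lemma continuous_frame a b : continuous (fun y => frame y a b).
Proof.
move=> y; under eq_fun do rewrite householder_mxE.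
apply: cvgB; last exact: cvg_cst.
apply: cvgM; last by apply: cvgD; [exact: cvg_cst | exact: continuous_weight].
apply: cvgM; last by apply: cvgD; [exact: cvg_cst | exact: continuous_weight].
apply: cvgV; first exact: weight_s0.
by apply: cvgD; [exact: cvg_cst | exact: continuous_weight].
Qed.

Definition unitary_frame (y : Y) : 'M[C]_(n * m) :=
  map_mx (real_complex R) (frame y) *t 1%:M.

Lemma unitary_frame_unitary y : unitary_mx (unitary_frame y).
Proof. exact/unitary_tens_orthogonal/frame_orthogonal. Qed.

Lemma adjmx_unitary_frame y :
  adjmx (unitary_frame y) = (map_mx (real_complex R) (frame y))^T *t 1%:M.
Proof. by rewrite adjmx_tens adjmx_real adjmx1 map_trmx. Qed.

Lemma continuous_unitary_frame : mx_continuous unitary_frame.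
Proof.
apply/mx_continuousP => i j; case: (mxtens_indexP i) => a p; case: (mxtens_indexP j) => b q.
under eq_fun do rewrite tensmxE mxE.
apply: ccontinuousM; [exact/ccontinuous_real/continuous_frame | exact: ccontinuous_cst].
Qed.

Definition f_flat (x : X) : 'M[C]_m := f x - (cutoff x)%:C *: (f x - f x0).

Lemma f_flat_ball x : mdist x0 x < eta -> f_flat x = f x0.
Proof. by move=> x_eta; rewrite /f_flat cutoff_ball // rmorph1 scale1r opprB addrC subrK. Qed.

Lemma continuous_f_flat : mx_continuous f_flat.
Proof.
apply: mx_continuousB => //; apply: mx_continuousZ; first exact: continuous_cutoff.
by apply: mx_continuousB => //; exact: mx_continuous_cst.
Qed.

Definition conj_flat (y : Y) : 'M[C]_(n * m) :=
  unitary_frame y *m diag_hom lam f_flat y *m adjmx (unitary_frame y).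

Definition corner (y : Y) : 'M[C]_(n * m - m) := mxcorner hn (conj_flat y).

Lemma conj_flat_diag2 y : conj_flat y = diag2 hn (f x0) (corner y).
Proof.
apply: diag2_mxcorner => a p b q ab0.
rewrite /conj_flat adjmx_unitary_frame diag_homE.
apply: conj_blockdiag_row_col ab0 => [|s].
  by rewrite map_trmx -map_mxM frame_orthogonal map_mx1.
rewrite mxE frame_row => w0; apply/f_flat_ball/weight_neq0.
by apply: contraNneq w0 => ->.
Qed.

Lemma continuous_corner : mx_continuous corner.
Proof.
have flat_cont : mx_continuous (diag_hom lam f_flat).
  rewrite (funext (diag_homE lam f_flat)); apply: mx_continuous_blockdiag => s.
  by apply: (mx_continuous_comp (F := f_flat)); [exact: continuous_f_flat | exact: lam_cont].
have conj_cont : mx_continuous conj_flat.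
  apply: mx_continuousM; last exact/mx_continuous_adj/continuous_unitary_frame.
  exact: mx_continuousM continuous_unitary_frame flat_cont.
apply/mx_continuousP => i j; under eq_fun do rewrite /corner /mxcorner !mxE castmxE.
exact: conj_cont.
Qed.

Definition cutoff_err (x : X) : R := cutoff x * opnorm (f x - f x0).

Lemma cutoff_err_ge0 x : 0 <= cutoff_err x.
Proof. by rewrite mulr_ge0 ?cutoff_ge0 ?opnorm_ge0. Qed.

Lemma opnorm_sub_conj_flat y c : (forall x, cutoff_err x <= c) ->
  opnorm (unitary_frame y *m diag_hom lam f y *m adjmx (unitary_frame y) - conj_flat y) <= c.
Proof.
move=> err_c; have c0 := le_trans (cutoff_err_ge0 x0) (err_c x0).
rewrite /conj_flat -mulmxBl -mulmxBr.
apply: le_trans (opnorm_unitary_conj _ (unitary_frame_unitary y)) _.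
rewrite !diag_homE blockdiagB; apply: opnorm_blockdiag => // s.
rewrite /f_flat opprB addrC subrK.
exact: le_trans (opnormZ _ (cutoff_ge0 _)) (err_c _).
Qed.

Lemma continuous_cutoff_err : continuous cutoff_err.
Proof.
move=> x; apply: cvgM; first exact: continuous_cutoff.
by apply: continuous_opnorm; apply: mx_continuousB => //; exact: mx_continuous_cst.
Qed.

Lemma cutoff_err_lt eps x :
  (forall x y : X, mdist x y < 2 * eta -> opnorm (f x - f y) < eps) -> 0 < eps ->
  cutoff_err x < eps.
Proof.
move=> f_eps eps_gt0; rewrite /cutoff_err.
have [->|x_near] := eqVneq (cutoff x) 0; first by rewrite mul0r.
have := f_eps x x0; rewrite metric_sym => /(_ (cutoff_neq0 x_near)).
have := opnorm_ge0 (f x - f x0); move: (opnorm _) => r r0.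
by apply: le_lt_trans; rewrite ler_piMl ?cutoff_le1.
Qed.

End DiagonalHomomorphism.

Theorem corollary3p3 (R : realType) (X Y : metricType R) (n m : nat)
  (hn : (0 < n)%N)
  (hX : compact [set: X]) (hY : compact [set: Y])
  (lam : 'I_n -> Y -> X) (hlam : forall s, continuous (lam s))
  (eps : R) (heps : 0 < eps)
  (f : X -> 'M[R[i]]_m) (hf : mx_continuous f)
  (eta : R) (heta : 0 < eta)
  (hfeta : forall x y : X, mdist x y < 2 * eta -> opnorm (f x - f y) < eps)
  (x0 : X)
  (hcov : [set: Y] = \bigcup_(s in [set: 'I_n]) (lam s @^-1` [set x | mdist x0 x < eta])) :
  exists (u : Y -> 'M[R[i]]_(n * m)) (b : Y -> 'M[R[i]]_(n * m - m)),
    [/\ mx_continuous u, (forall y, unitary_mx (u y)), mx_continuous b &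
        supnorm (fun y => u y *m diag_hom lam f y *m adjmx (u y)
                          - diag2 hn (f x0) (b y)) < eps].
Proof.
have [xmax _ err_max] : exists2 x, x \in [set: X] &
    forall z, z \in [set: X] -> cutoff_err f eta x0 z <= cutoff_err f eta x0 x.
  apply: compact_EVT_max => //; first by exists x0.
  exact/continuous_subspaceT/continuous_cutoff_err.
exists (unitary_frame m hn lam eta x0), (corner hn lam f eta x0); split.
- by apply: continuous_unitary_frame.
- by apply: unitary_frame_unitary.
- by apply: continuous_corner.
apply: le_lt_trans (cutoff_err_lt x0 heta xmax hfeta heps).
apply: supnorm_le => [|y]; first exact: cutoff_err_ge0.
rewrite -(conj_flat_diag2 hn f heta hcov y).
by apply: (opnorm_sub_conj_flat hn hcov y) => z; exact: err_max (in_setT z).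
Qed.
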